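(* Let $B$ be a commutative ring with identity and $A$ a dense subring of $B$. Then the map $i^*:\operatorname{spec} B\to\operatorname{spec} A$, $i^*(P)=P\cap A$, is one-one.
   Context: All rings are commutative with identity; subrings contain the identity. A subring $A$ of $B$ is dense in $B$ if for every ideal $I$ of $B$ and every $b\in B\setminus \operatorname{rad}(I)$ there exists $a\in B\setminus\operatorname{rad}(I)$ with $ab\in A$. *)

From mathcomp Require Import all_boot all_algebra.
Set Implicit Arguments. Unset Strict Implicit. Unset Printing Implicit Defensive.
Import GRing.Theory.
Local Open Scope ring_scope.

Definition is_ideal (B : comPzRingType) (I : B -> Prop) : Prop :=
  [/\ I 0,
      (forall x y, I x -> I y -> I (x + y)) &
      (forall r x, I x -> I (r * x))].

(* P is a prime ideal of B (proper, hence an element of spec B). *)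
Definition is_prime_ideal (B : comPzRingType) (P : B -> Prop) : Prop :=
  [/\ is_ideal P, ~ P 1 &
      (forall x y, P (x * y) -> P x \/ P y)].

Definition rad (B : comPzRingType) (I : B -> Prop) : B -> Prop :=
  fun b => exists n : nat, I (b ^+ n).

Definition is_subring (B : comPzRingType) (A : B -> Prop) : Prop :=
  [/\ A 1,
      (forall x y, A x -> A y -> A (x - y)) &
      (forall x y, A x -> A y -> A (x * y))].

Definition dense_subring (B : comPzRingType) (A : B -> Prop) : Prop :=
  forall I : B -> Prop, is_ideal I ->
  forall b : B, ~ rad I b ->
  exists a : B, ~ rad I a /\ A (a * b).

From Pilot Require Import Defs.
From mathcomp Require Import all_boot all_algebra.
From Stdlib Require Import Classical.
Import Defs.
Local Open Scope ring_scope.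
Import GRing.Theory.

(* Primes [P], [Q] with [P ∩ A ⊆ Q] satisfy [P ⊆ Q]: if [x ∈ P] lies outside
   the prime [Q], density yields [a] outside [rad Q] with
   [a * x] in [A]; then [a * x] lies in [P], hence in [Q], and primality of [Q]
   puts [a] or [x] in [Q], a contradiction. *)

Lemma rad_subset {B : comPzRingType} (I : B -> Prop) (b : B) : I b -> rad I b.
Proof. by exists 1%N; rewrite expr1. Qed.

Lemma prime_ideal_rad {B : comPzRingType} {P : B -> Prop} :
  is_prime_ideal P -> forall b, rad P b -> P b.
Proof.
case=> _ P1 Pmul b [n]; elim: n => [|n IHn].
  by rewrite expr0 => /P1.
by rewrite exprS => /Pmul [].
Qed.

Lemma dense_contraction_subset {B : comPzRingType} {A P Q : B -> Prop} :
  dense_subring A -> is_ideal P -> is_prime_ideal Q ->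
  (forall x, A x -> P x -> Q x) ->
  forall x, P x -> Q x.
Proof.
move=> denseA [_ _ Pmul] primeQ PQ_A x Px.
have [//|notQx] := classic (Q x).
have [idealQ _ Qmul] := primeQ.
have notradQx : ~ rad Q x by move/(prime_ideal_rad primeQ).
have [a [notradQa Aax]] := denseA Q idealQ x notradQx.
have [Qa|//] := Qmul a x (PQ_A _ Aax (Pmul a x Px)).
by case: notradQa; apply: rad_subset.
Qed.

Theorem theorem3p3 (B : comPzRingType) (A : B -> Prop) :
  is_subring A -> dense_subring A ->
  forall P Q : B -> Prop, is_prime_ideal P -> is_prime_ideal Q ->
  (forall x : B, A x -> (P x <-> Q x)) ->
  forall x : B, P x <-> Q x.
Proof.
move=> _ denseA P Q primeP primeQ PQ_A x.
have [idealP _ _] := primeP; have [idealQ _ _] := primeQ.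
split; apply: (dense_contraction_subset denseA) => // y /PQ_A [] //.
Qed.
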